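(* Let $\mathcal V$ be a congruence modular variety, $\mathbb A\in\mathcal V$, $n\ge2$, and let $R\le\mathbb A^{2^n}$ be an $(n)$-dimensional tolerance of $\mathbb A$ such that $\mathrm{face}_i^0(R)$ is an $(n-1)$-dimensional congruence of $\mathbb A$ for each $i\in n$. If there is $k\in n$ such that $\mathrm{face}_k(R)$ is a congruence of the algebra $\mathrm{face}_k^0(R)$ (a subalgebra of $\mathbb A^{2^{n\setminus\{k\}}}$), then $R$ is an $(n)$-dimensional congruence of $\mathbb A$.
   Context: Cube notation. $n=\{0,\dots,n-1\}$, $2=\{0,1\}$; for finite $S\subseteq\mathbb N$, $2^S$ is the set of functions $S\to2$, and an $(S)$-cube over $A$ is $\gamma\in A^{2^S}$. For $i\in S$, $j\in 2$: $\mathrm{face}_i^j(\gamma)\in A^{2^{S\setminus\{i\}}}$ is $g\mapsto\gamma_{g\cup\{(i,j)\}}$; $\mathrm{glue}_{\{i\}}(\zeta,\eta)$ is the unique cube with $\mathrm{face}_i^0=\zeta$, $\mathrm{face}_i^1=\eta$; $\mathrm{refl}_i^j(\gamma)=\mathrm{glue}_{\{i\}}(\mathrm{face}_i^j\gamma,\mathrm{face}_i^j\gamma)$; $\mathrm{sym}_i(\gamma)=\mathrm{glue}_{\{i\}}(\mathrm{face}_i^1\gamma,\mathrm{face}_i^0\gamma)$. For $R\subseteq A^{2^S}$, $\mathrm{face}_i^j(R)=\{\mathrm{face}_i^j(\gamma):\gamma\in R\}$ and $\mathrm{face}_i(R)=\{(\mathrm{face}_i^0\gamma,\mathrm{face}_i^1\gamma):\gamma\in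 R\}$. A $1$-element-index cube is identified with a pair. With $|S|=m\ge1$: a subuniverse $R$ of $\mathbb A^{2^S}$ is an $(m)$-dimensional tolerance of $\mathbb A$ if $\mathrm{refl}_i^j(\gamma),\mathrm{sym}_i(\gamma)\in R$ for all $\gamma\in R$, $i\in S$, $j\in2$; it is an $(m)$-dimensional congruence of $\mathbb A$ if moreover $\mathrm{face}_i(R)$ is a transitive relation for every $i\in S$. *)

From mathcomp Require Import all_boot.
Set Implicit Arguments.
Unset Strict Implicit.
Unset Printing Implicit Defensive.

Section UA.
Variables (F : Type) (ar : F -> nat).

Definition ops_on (A : Type) := forall f : F, ('I_(ar f) -> A) -> A.

Inductive term : Type :=
| Var : nat -> term
| App : forall f : F, ('I_(ar f) -> term) -> term.

Fixpoint eval (A : Type) (opsA : ops_on A) (v : nat -> A) (t : term) : A :=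
  match t with
  | Var x => v x
  | App f ts => opsA f (fun k => eval opsA v (ts k))
  end.

Definition models (E : term -> term -> Prop) (A : Type) (opsA : ops_on A) :=
  forall s t, E s t -> forall v : nat -> A, eval opsA v s = eval opsA v t.

Definition is_congruence (A : Type) (opsA : ops_on A) (th : A -> A -> Prop) :=
  [/\ (forall x, th x x), (forall x y, th x y -> th y x),
      (forall x y z, th x y -> th y z -> th x z) &
      (forall f (xs ys : 'I_(ar f) -> A), (forall k, th (xs k) (ys k)) ->
          th (opsA f xs) (opsA f ys))].

Definition cong_join (A : Type) (opsA : ops_on A) (al be : A -> A -> Prop) :=
  fun x y => forall th, is_congruence opsA th ->
    (forall a b, al a b -> th a b) -> (forall a b, be a b -> th a b) -> th x y.

Definition cong_meet (A : Type) (al be : A -> A -> Prop) :=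
  fun x y => al x y /\ be x y.

Definition cong_modular (A : Type) (opsA : ops_on A) :=
  forall al be ga, is_congruence opsA al -> is_congruence opsA be ->
    is_congruence opsA ga -> (forall x y, al x y -> ga x y) ->
    forall x y, cong_meet (cong_join opsA al be) ga x y <->
                cong_join opsA al (cong_meet be ga) x y.

Definition CM_variety (E : term -> term -> Prop) :=
  forall (B : Type) (opsB : ops_on B), models E opsB -> cong_modular opsB.

End UA.

(* An (S)-cube over A, for a finite index type S, is a map 2^S -> A. *)
Definition cube (S : finType) (A : Type) := {ffun {ffun S -> bool} -> A}.

Definition minus (S : finType) (i : S) : finType := {x : S | x != i}.

Section Cubes.
Variables (S : finType) (A : Type).

(* g U {(i,j)} *)
Definition ext (i : S) (j : bool) (g : {ffun minus i -> bool}) : {ffun S -> bool} :=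
  [ffun x => oapp g j (insub x : option (minus i))].

Definition restr (i : S) (h : {ffun S -> bool}) : {ffun minus i -> bool} :=
  [ffun y => h (val y)].

Definition face (i : S) (j : bool) (c : cube S A) : cube (minus i) A :=
  [ffun g => c (@ext i j g)].

Definition glue (i : S) (z e : cube (minus i) A) : cube S A :=
  [ffun h : {ffun S -> bool} => if h i then e (@restr i h) else z (@restr i h)].

Definition refl_cube (i : S) (j : bool) (c : cube S A) : cube S A :=
  @glue i (@face i j c) (@face i j c).

Definition sym_cube (i : S) (c : cube S A) : cube S A :=
  @glue i (@face i true c) (@face i false c).

Definition face_set (i : S) (j : bool) (R : cube S A -> Prop) : cube (minus i) A -> Prop :=
  fun z => exists2 c, R c & @face i j c = z.

Definition face_rel (i : S) (R : cube S A -> Prop) : cube (minus i) A -> cube (minus i) A -> Prop :=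
  fun z e => exists c, [/\ R c, @face i false c = z & @face i true c = e].
End Cubes.

Arguments ext {S} i j g.
Arguments restr {S} i h.
Arguments face {S A} i j c.
Arguments glue {S A} i z e.
Arguments refl_cube {S A} i j c.
Arguments sym_cube {S A} i c.
Arguments face_set {S A} i j R _.
Arguments face_rel {S A} i R _ _.

Section CubeAlg.
Variables (F : Type) (ar : F -> nat).

Definition pow_ops (S : finType) (A : Type) (opsA : ops_on ar A) : ops_on ar (cube S A) :=
  fun f cs => [ffun g => opsA f (fun k => cs k g)].

Definition subuniverse (B : Type) (opsB : ops_on ar B) (R : B -> Prop) :=
  forall f (xs : 'I_(ar f) -> B), (forall k, R (xs k)) -> R (opsB f xs).

Definition cube_tolerance (S : finType) (A : Type) (opsA : ops_on ar A)
    (R : cube S A -> Prop) :=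
  [/\ subuniverse (@pow_ops S A opsA) R,
      (forall c i j, R c -> R (refl_cube i j c)) &
      (forall c i, R c -> R (sym_cube i c))].

Definition transitive_rel (T : Type) (r : T -> T -> Prop) :=
  forall x y z, r x y -> r y z -> r x z.

Definition cube_congruence (S : finType) (A : Type) (opsA : ops_on ar A)
    (R : cube S A -> Prop) :=
  cube_tolerance opsA R /\ forall i : S, transitive_rel (face_rel i R).

Definition congruence_of_sub (B : Type) (opsB : ops_on ar B) (U : B -> Prop)
    (th : B -> B -> Prop) :=
  [/\ (forall x y, th x y -> U x /\ U y),
      (forall x, U x -> th x x), (forall x y, th x y -> th y x),
      transitive_rel th &
      (forall f (xs ys : 'I_(ar f) -> B), (forall k, th (xs k) (ys k)) ->
          th (opsB f xs) (opsB f ys))].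
End CubeAlg.

From Stdlib Require Import FunctionalExtensionality ProofIrrelevance.
From mathcomp Require Import all_boot.
Set Implicit Arguments. Unset Strict Implicit. Unset Printing Implicit Defensive.

(* Transitivity of [face_rel i R] is the same as closure of [R] under
   composing two cubes that abut in direction [i] ([transitive_face_relP]).  For [i != k] the cubes of [R] that are degenerate
   in direction [k] form a subalgebra [Bk], a copy of [face_k^0(R)], on which
   "being the two [k]-faces of a member of [R]" is a congruence [theta].
   Composition in direction [i] inside [Bk] is inherited from the congruence
   [face_k^0(R)] ([degenerate_gluing]); three applications of the Shifting
   Lemma ([shifting], derived from modularity in subalgebras of products)
   show that [theta] is compatible with composition in direction [i]
   ([theta_glue]), which is exactly composition of arbitrary cubes of [R] in
   direction [i] ([gluing_transfer]). *)

Section Constructions.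
Variables (F : Type) (ar : F -> nat) (E : term ar -> term ar -> Prop).

Definition prod_ops (Z1 Z2 : Type) (o1 : ops_on ar Z1) (o2 : ops_on ar Z2) :
    ops_on ar (Z1 * Z2) :=
  fun f ws => (o1 f (fun j => (ws j).1), o2 f (fun j => (ws j).2)).

Definition sub_ops (Z : Type) (oZ : ops_on ar Z) (U : Z -> Prop)
    (HU : subuniverse oZ U) : ops_on ar {z | U z} :=
  fun f ws => exist U (oZ f (fun j => proj1_sig (ws j)))
                      (HU f _ (fun j => proj2_sig (ws j))).

Lemma eval_prod (Z1 Z2 : Type) (o1 : ops_on ar Z1) (o2 : ops_on ar Z2)
    (v : nat -> Z1 * Z2) (t : term ar) :
  eval (prod_ops o1 o2) v t =
  (eval o1 (fun x => (v x).1) t, eval o2 (fun x => (v x).2) t).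
Proof.
elim: t => [x|f ts IH] /=; first by case: (v x).
by congr (_, _); congr (_ _ _); apply: functional_extensionality => j; rewrite IH.
Qed.

Lemma eval_sub (Z : Type) (oZ : ops_on ar Z) (U : Z -> Prop)
    (HU : subuniverse oZ U) (v : nat -> {z | U z}) (t : term ar) :
  proj1_sig (eval (sub_ops HU) v t) = eval oZ (fun x => proj1_sig (v x)) t.
Proof.
elim: t => [x|f ts IH] //=.
by congr (oZ f _); apply: functional_extensionality => j; rewrite IH.
Qed.

Lemma eval_pow (S : finType) (A : Type) (opsA : ops_on ar A)
    (v : nat -> cube S A) (t : term ar) :
  eval (pow_ops opsA) v t = [ffun g => eval opsA (fun x => v x g) t].
Proof.
apply/ffunP => g; rewrite ffunE; elim: t => [x|f ts IH] //=.
by rewrite ffunE; congr (opsA f _); apply: functional_extensionality.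
Qed.

Lemma models_prod (Z1 Z2 : Type) (o1 : ops_on ar Z1) (o2 : ops_on ar Z2) :
  models E o1 -> models E o2 -> models E (prod_ops o1 o2).
Proof. by move=> m1 m2 s t Est v; rewrite !eval_prod (m1 s t Est) (m2 s t Est). Qed.

Lemma models_sub (Z : Type) (oZ : ops_on ar Z) (U : Z -> Prop)
    (HU : subuniverse oZ U) :
  models E oZ -> models E (sub_ops HU).
Proof.
move=> m s t Est v; apply: (eq_sig_hprop (fun z => proof_irrelevance (U z))).
by rewrite !eval_sub (m s t Est).
Qed.

Lemma models_pow (S : finType) (A : Type) (opsA : ops_on ar A) :
  models E opsA -> models E (@pow_ops F ar S A opsA).
Proof.
by move=> m s t Est v; rewrite !eval_pow; apply/ffunP => g; rewrite !ffunE (m s t Est).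
Qed.

End Constructions.

Section RelativeCongruences.
Variables (F : Type) (ar : F -> nat).

(* [th] restricts to a congruence of the subalgebra with universe [U];
   unlike [congruence_of_sub], [th] may relate elements outside [U]. *)
Definition rel_congruence (Z : Type) (oZ : ops_on ar Z) (U : Z -> Prop)
    (th : Z -> Z -> Prop) :=
  [/\ (forall x, U x -> th x x),
      (forall x y, U x -> U y -> th x y -> th y x),
      (forall x y z, U x -> U y -> U z -> th x y -> th y z -> th x z) &
      (forall f (xs ys : 'I_(ar f) -> Z), (forall j, U (xs j)) ->
         (forall j, U (ys j)) -> (forall j, th (xs j) (ys j)) ->
         th (oZ f xs) (oZ f ys))].

Lemma rel_congruence_eq (Z : Type) (oZ : ops_on ar Z) (U : Z -> Prop) :
  rel_congruence oZ U eq.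
Proof.
split=> //; first by move=> x y z _ _ _ ->.
by move=> f xs ys _ _ /functional_extensionality ->.
Qed.

Lemma rel_congruence_and (Z : Type) (oZ : ops_on ar Z) (U : Z -> Prop)
    (al be : Z -> Z -> Prop) :
  rel_congruence oZ U al -> rel_congruence oZ U be ->
  rel_congruence oZ U (fun x y => al x y /\ be x y).
Proof.
move=> [a1 a2 a3 a4] [b1 b2 b3 b4]; split.
- by move=> x Ux; split; auto.
- by move=> x y Ux Uy [? ?]; split; auto.
- by move=> x y z Ux Uy Uz [? ?] [? ?]; split; [apply: (a3 x y z) | apply: (b3 x y z)].
- by move=> f xs ys Hx Hy H; split; [apply: a4 | apply: b4] => // j; case: (H j).
Qed.

Lemma rel_congruence_pull (W Z : Type) (oW : ops_on ar W) (oZ : ops_on ar Z)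
    (UW : W -> Prop) (UZ : Z -> Prop) (phi : W -> Z) (th : Z -> Z -> Prop) :
  rel_congruence oZ UZ th -> (forall w, UW w -> UZ (phi w)) ->
  (forall f ws, phi (oW f ws) = oZ f (fun j => phi (ws j))) ->
  rel_congruence oW UW (fun w w' => th (phi w) (phi w')).
Proof.
move=> [t1 t2 t3 t4] HU Hphi; split.
- by move=> x Ux; apply/t1/HU.
- by move=> x y Ux Uy; apply: t2; apply: HU.
- by move=> x y z Ux Uy Uz; apply: t3; apply: HU.
- move=> f xs ys Hx Hy H; rewrite !Hphi.
  by apply: t4 => // j; apply: HU; [exact: Hx | exact: Hy].
Qed.

Lemma rel_congruence_sub (Z : Type) (oZ : ops_on ar Z) (U : Z -> Prop)
    (HU : subuniverse oZ U) (th : Z -> Z -> Prop) :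
  rel_congruence oZ U th ->
  is_congruence (sub_ops HU) (fun a b => th (proj1_sig a) (proj1_sig b)).
Proof.
move=> [t1 t2 t3 t4]; split.
- by move=> [x Ux]; apply: t1.
- by move=> [x Ux] [y Uy]; apply: t2.
- by move=> [x Ux] [y Uy] [z Uz]; apply: t3.
- by move=> f xs ys H; apply: t4 => // j; [case: (xs j) | case: (ys j)].
Qed.

End RelativeCongruences.

Section Shifting.
Variables (F : Type) (ar : F -> nat) (E : term ar -> term ar -> Prop).
Hypothesis CM : CM_variety E.

(* The proof works in the subalgebra [P] of
   [U * U] carried by [be], with the congruences [al2 := al * al],
   [ga2 := ga * ga] and the kernel [eta] of the first projection:
   [(y,v) al2 (x,u) (eta /\ ga2) (x,x) al2 (y,y)] and [(y,v) eta (y,y)], so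
   modularity puts [(y,v), (y,y)] in [(eta /\ ga2) \/ (al2 /\ eta)], which
   lies below [ga2] thanks to [al /\ be <= ga]. *)
Lemma shifting (Z : Type) (oZ : ops_on ar Z) (U : Z -> Prop)
    (al be ga : Z -> Z -> Prop) :
  models E oZ -> subuniverse oZ U ->
  rel_congruence oZ U al -> rel_congruence oZ U be -> rel_congruence oZ U ga ->
  (forall a b, U a -> U b -> al a b -> be a b -> ga a b) ->
  forall x y u v, U x -> U y -> U u -> U v ->
  be x u -> be y v -> al x y -> al u v -> ga x u -> ga y v.
Proof.
move=> mZ HU cal cbe cga meet x y u v Ux Uy Uu Uv bxu byv axy auv gxu.
have [a1 a2 _ _] := cal; have [b1 b2 b3 b4] := cbe; have [g1 g2 _ _] := cga.
pose UP (w : Z * Z) := [/\ U w.1, U w.2 & be w.1 w.2].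
have HUP : subuniverse (prod_ops oZ oZ) UP.
  by move=> f ws H; split; [apply: HU | apply: HU | apply: b4] => j; case: (H j).
have mP : models E (sub_ops HUP) by apply/models_sub/models_prod.
have fstU : forall w, UP w -> U w.1 by move=> w [].
have sndU : forall w, UP w -> U w.2 by move=> w [].
have pair_cong : forall th, rel_congruence oZ U th ->
    rel_congruence (prod_ops oZ oZ) UP (fun w w' => th w.1 w'.1 /\ th w.2 w'.2).
  move=> th cth; apply: rel_congruence_and.
  - exact: (rel_congruence_pull (phi := fst)) cth fstU _.
  - exact: (rel_congruence_pull (phi := snd)) cth sndU _.
have ceta : rel_congruence (prod_ops oZ oZ) UP (fun w w' => w.1 = w'.1).
  exact: (rel_congruence_pull (phi := fst)) (rel_congruence_eq _ _) fstU _.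
pose lift (th : Z * Z -> Z * Z -> Prop) (a b : {w | UP w}) :=
  th (proj1_sig a) (proj1_sig b).
pose eta := lift (fun w w' => w.1 = w'.1).
pose al2 := lift (fun w w' => al w.1 w'.1 /\ al w.2 w'.2).
pose ga2 := lift (fun w w' => ga w.1 w'.1 /\ ga w.2 w'.2).
pose eta_ga2 := fun a b => eta a b /\ ga2 a b.
have cal2 : is_congruence (sub_ops HUP) al2 :=
  rel_congruence_sub HUP (pair_cong _ cal).
have cga2 : is_congruence (sub_ops HUP) ga2 :=
  rel_congruence_sub HUP (pair_cong _ cga).
have ceta' : is_congruence (sub_ops HUP) eta := rel_congruence_sub HUP ceta.
have ceta_ga2 : is_congruence (sub_ops HUP) eta_ga2 :=
  rel_congruence_sub HUP (rel_congruence_and ceta (pair_cong _ cga)).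
pose X1 : {w | UP w} := exist UP (x, u) (And3 Ux Uu bxu).
pose X2 : {w | UP w} := exist UP (x, x) (And3 Ux Ux (b1 x Ux)).
pose Y1 : {w | UP w} := exist UP (y, v) (And3 Uy Uv byv).
pose Y2 : {w | UP w} := exist UP (y, y) (And3 Uy Uy (b1 y Uy)).
have join_Y : cong_join (sub_ops HUP) eta_ga2 al2 Y1 Y2.
  move=> th [_ t2 t3 _] Heta_ga2 Hal2.
  apply: (t3 _ X1); first by apply: Hal2; split; apply: a2.
  apply: (t3 _ X2); last by apply: Hal2.
  by apply: Heta_ga2; split => //; split; [apply: g1 | apply: g2].
have below_ga2 : forall a b, cong_meet al2 eta a b -> ga2 a b.
  move=> [w [Uw1 Uw2 Bw]] [w' [Uw'1 Uw'2 Bw']] [[_ al_w2] /= eq_w1].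
  split; first by rewrite eq_w1; apply: g1.
  apply: meet => //; apply: (b3 _ w.1) => //; first exact: b2.
  by rewrite eq_w1.
have Y_join := (CM mP ceta_ga2 cal2 ceta' (fun a b H => proj1 H) Y1 Y2).1
                  (conj join_Y erefl).
have [_ /= ga_vy] := Y_join ga2 cga2 (fun a b H => proj2 H) below_ga2.
exact: g2.
Qed.

End Shifting.

Section Vertices.
Variable S : finType.

Definition upd (h : {ffun S -> bool}) (i : S) (b : bool) : {ffun S -> bool} :=
  [ffun x => if x == i then b else h x].

Lemma upd_at (h : {ffun S -> bool}) (i : S) (b : bool) : upd h i b i = b.
Proof. by rewrite ffunE eqxx. Qed.

Lemma upd_fix (h : {ffun S -> bool}) (i : S) (b : bool) : h i = b -> upd h i b = h.
Proof. by move=> <-; apply/ffunP => x; rewrite ffunE; case: eqP => [->|]. Qed.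

Lemma upd_upd (h : {ffun S -> bool}) (i : S) (b b' : bool) :
  upd (upd h i b) i b' = upd h i b'.
Proof. by apply/ffunP => x; rewrite !ffunE; case: eqP. Qed.

Lemma upd_comm (h : {ffun S -> bool}) (i k : S) (b b' : bool) : i != k ->
  upd (upd h i b) k b' = upd (upd h k b') i b.
Proof.
move=> ik; apply/ffunP => x; rewrite !ffunE.
by case: (eqVneq x k) => [->|//]; rewrite eq_sym (negbTE ik).
Qed.

Lemma ext_restr (i : S) (b : bool) (h : {ffun S -> bool}) :
  ext i b (restr i h) = upd h i b.
Proof.
apply/ffunP => x; rewrite !ffunE.
case: insubP => [u ux eq_ux|] /=; first by rewrite ffunE eq_ux (negbTE ux).
by rewrite negbK => ->.
Qed.

Lemma upd_ext (i : S) (b b' : bool) (g : {ffun minus i -> bool}) :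
  upd (ext i b g) i b' = ext i b' g.
Proof. by rewrite -ext_restr; congr ext; apply/ffunP => u; rewrite !ffunE valK. Qed.

Lemma ext_at (i : S) (b : bool) (g : {ffun minus i -> bool}) : ext i b g i = b.
Proof. by rewrite ffunE insubF ?eqxx. Qed.

End Vertices.

Lemma ext_upd (S : finType) (k : S) (i : minus k) (b0 b : bool)
    (g : {ffun minus k -> bool}) :
  ext k b0 (upd g i b) = upd (ext k b0 g) (val i) b.
Proof.
apply/ffunP => x; rewrite !ffunE.
case: insubP => [u _ <-|] /=; first by rewrite ffunE val_eqE.
by rewrite negbK => /eqP ->; rewrite eq_sym (negbTE (valP i)).
Qed.

Section CubeOperations.
Variables (S : finType) (A : Type).
Implicit Types (c d : cube S A) (h : {ffun S -> bool}).

Lemma faceE (i : S) (b : bool) c g : face i b c g = c (ext i b g).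
Proof. by rewrite ffunE. Qed.

Lemma reflE (i : S) (b : bool) c h : refl_cube i b c h = c (upd h i b).
Proof. by rewrite /refl_cube /glue ffunE !faceE ext_restr; case: (h i). Qed.

Lemma symE (i : S) c h : sym_cube i c h = c (upd h i (~~ h i)).
Proof. by rewrite /sym_cube /glue ffunE !faceE !ext_restr; case: (h i). Qed.

(* [mix i c d] has the [0]-face of [c] and the [1]-face of [d] in direction
   [i]; when [c] and [d] [abut] in direction [i] it is their composite. *)
Definition mix (i : S) c d : cube S A :=
  [ffun h : {ffun S -> bool} => if h i then d h else c h].

Definition abut (i : S) c d := forall h, c (upd h i true) = d (upd h i false).

Definition gluing_closed (i : S) (T : cube S A -> Prop) :=
  forall c d, T c -> T d -> abut i c d -> T (mix i c d).

Definition degenerate (k : S) c := forall h b, c (upd h k b) = c h.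

Definition same_face (i : S) (b : bool) c d := forall h, c (upd h i b) = d (upd h i b).

Lemma mixE (i : S) c d h : mix i c d h = if h i then d h else c h.
Proof. by rewrite ffunE. Qed.

Lemma mix_id (i : S) c : mix i c c = c.
Proof. by apply/ffunP => h; rewrite ffunE; case: (h i). Qed.

Lemma transitive_face_relP (i : S) (T : cube S A -> Prop) :
  transitive_rel (face_rel i T) <-> gluing_closed i T.
Proof.
split=> [tr c d Tc Td cd|glue x y z [c [Tc <- cy]] [d [Td dy <-]]].
- have cd1 : face i true c = face i false d.
    by apply/ffunP => g; rewrite !faceE -(upd_ext false true) cd upd_ext.
  have [e [Te e0 e1]] := tr _ _ _ (ex_intro _ c (And3 Tc erefl erefl))
                                  (ex_intro _ d (And3 Td (esym cd1) erefl)).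
  suff -> : mix i c d = e by [].
  apply/ffunP => h; rewrite mixE.
  have faces_e b : e (upd h i b) = (if b then d else c) (upd h i b).
    by case: b; rewrite -!ext_restr -!faceE ?e0 ?e1.
  by have := faces_e (h i); rewrite upd_fix //; case: (h i).
- exists (mix i c d); split.
  + by apply: glue => // h; rewrite -!ext_restr -!faceE cy dy.
  + by apply/ffunP => g; rewrite !faceE mixE ext_at.
  + by apply/ffunP => g; rewrite !faceE mixE ext_at.
Qed.

End CubeOperations.

Section CubeAlgebra.
Variables (F : Type) (ar : F -> nat) (A : Type) (opsA : ops_on ar A) (S : finType).
Arguments opsA : clear implicits.
Local Notation powA := (@pow_ops F ar S A opsA).

Lemma powE f (cs : 'I_(ar f) -> cube S A) (h : {ffun S -> bool}) :
  powA cs h = opsA f (fun j => cs j h).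
Proof. by rewrite ffunE. Qed.

Lemma mix_pow (l : S) f (xs ys : 'I_(ar f) -> cube S A) :
  mix l (powA xs) (powA ys) = powA (fun j => mix l (xs j) (ys j)).
Proof.
apply/ffunP => h; rewrite !ffunE; case hl: (h l); congr (opsA f _);
  by apply: functional_extensionality => j; rewrite mixE hl.
Qed.

Lemma same_face_congruence (U : cube S A -> Prop) (i : S) (b : bool) :
  rel_congruence powA U (same_face i b).
Proof.
split=> [//|x y _ _ xy h|x y z _ _ _ xy yz h|f xs ys _ _ xys h]; first by rewrite xy.
- by rewrite xy yz.
- by rewrite !powE; congr (opsA f _); apply: functional_extensionality => j; apply: xys.
Qed.

End CubeAlgebra.

Section CubeIdentities.
Variables (S : finType) (A : Type).
Implicit Types (a b c d x y : cube S A) (h : {ffun S -> bool}).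

Lemma same_faces_eq (i : S) a b :
  same_face i false a b -> same_face i true a b -> a = b.
Proof.
by move=> ab0 ab1; apply/ffunP => h; rewrite -(upd_fix (erefl (h i))); case: (h i).
Qed.

Lemma mix_refl (k : S) c : mix k (refl_cube k false c) (refl_cube k true c) = c.
Proof. by apply/ffunP => h; rewrite mixE !reflE; case hk: (h k); rewrite upd_fix. Qed.

Lemma mix_interchange (i k : S) a a' b b' :
  mix k (mix i a b) (mix i a' b') = mix i (mix k a a') (mix k b b').
Proof. by apply/ffunP => h; rewrite !mixE; case: (h i); case: (h k). Qed.

Lemma refl_degenerate (k : S) (b : bool) c : degenerate k (refl_cube k b c).
Proof. by move=> h b'; rewrite !reflE upd_upd. Qed.

Section OtherDirection.
Variables (i k : S).
Hypothesis ik : i != k.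

Lemma refl_mix (b : bool) x y :
  refl_cube i b (mix k x y) = mix k (refl_cube i b x) (refl_cube i b y).
Proof. by apply/ffunP => h; rewrite reflE !mixE !reflE ffunE eq_sym (negbTE ik). Qed.

Lemma abut_refl (b : bool) c d : abut i c d -> abut i (refl_cube k b c) (refl_cube k b d).
Proof. by move=> cd h; rewrite !reflE !(upd_comm _ _ _ ik) cd. Qed.

Lemma degenerate_refl (b : bool) c : degenerate k c -> degenerate k (refl_cube i b c).
Proof. by move=> Dc h b'; rewrite !reflE -(upd_comm _ _ _ ik) Dc. Qed.

Lemma degenerate_mix c d : degenerate k c -> degenerate k d -> degenerate k (mix i c d).
Proof. by move=> Dc Dd h b; rewrite !mixE ffunE (negbTE ik) Dc Dd. Qed.

End OtherDirection.
End CubeIdentities.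

Lemma tolerance_refl (F : Type) (ar : F -> nat) (A : Type) (opsA : ops_on ar A)
    (S : finType) (R : cube S A -> Prop) :
  cube_tolerance opsA R -> forall (l : S) (b : bool) c, R c -> R (refl_cube l b c).
Proof. by move=> [_ reflR _] l b c; apply: reflR. Qed.

(* For [i != k], composition in direction [i] of [k]-degenerate members of [R]
   is composition in direction [i] inside [face_k^0(R)], which is available
   when that face is transitive in direction [i]. *)
Lemma degenerate_gluing (S : finType) (A : Type) (R : cube S A -> Prop)
    (k i : S) (ik : i != k) :
  (forall c, R c -> R (refl_cube k false c)) ->
  transitive_rel (face_rel (exist _ i ik : minus k) (face_set k false R)) ->
  forall c d, R c -> R d -> degenerate k c -> degenerate k d -> abut i c d ->
  R (mix i c d).
Proof.
move=> reflR /transitive_face_relP glue c d Rc Rd Dc Dd cd.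
have [e Re e_face] :
    face_set k false R (mix (exist _ i ik : minus k) (face k false c) (face k false d)).
  by apply: glue; [exists c | exists d | move=> g; rewrite !faceE !ext_upd /=].
suff -> : mix i c d = refl_cube k false e by apply: reflR.
apply/ffunP => h; rewrite reflE -ext_restr -[e _]faceE e_face mixE !faceE ext_restr.
by rewrite !ffunE /= Dc Dd.
Qed.

(* Everything happens in the subalgebra [Bk] of [k]-degenerate members of
   [R] (a copy of [face_k^0(R)]), equipped with the congruence [theta] that
   transports [face_k(R)]. *)
Section GluingTransfer.
Variables (F : Type) (ar : F -> nat) (E : term ar -> term ar -> Prop).
Variables (A : Type) (opsA : ops_on ar A) (S : finType) (R : cube S A -> Prop).
Arguments opsA : clear implicits.
Hypotheses (CM : CM_variety E) (mA : models E opsA) (tolR : cube_tolerance opsA R).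
Variables (k i : S).
Hypotheses (ik : i != k) (glue_k : gluing_closed k R).
Hypothesis glue_degenerate : forall c d, R c -> R d ->
  degenerate k c -> degenerate k d -> abut i c d -> R (mix i c d).

Local Notation powA := (@pow_ops F ar S A opsA).
Implicit Types (a c d x y : cube S A).

Definition Bk c := R c /\ degenerate k c.

(* [theta a b] says that the pair [(a, b)] of [k]-degenerate cubes is the pair
   of [k]-faces of a member of [R]. *)
Definition theta a b := R (mix k a b).

Lemma Bk_sub : subuniverse powA Bk.
Proof.
case: tolR => subR _ _ f xs Bxs; split; first by apply: subR => j; case: (Bxs j).
move=> h b; rewrite !powE; congr (opsA f _).
by apply: functional_extensionality => j; case: (Bxs j) => _ ->.
Qed.

Lemma theta_congruence : rel_congruence powA Bk theta.
Proof.
case: tolR => subR _ symR; split.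
- by move=> x [Rx _]; rewrite /theta mix_id.
- move=> x y [_ Dx] [_ Dy] Txy; rewrite /theta.
  suff -> : mix k y x = sym_cube k (mix k x y) by apply: symR.
  by apply/ffunP => h; rewrite symE !mixE upd_at; case: (h k); rewrite /= ?Dx ?Dy.
- move=> x y z _ [_ Dy] _ Txy Tyz; rewrite /theta.
  have -> : mix k x z = mix k (mix k x y) (mix k y z).
    by apply/ffunP => h; rewrite !mixE; case: (h k).
  by apply: glue_k => // h; rewrite !mixE !upd_at /= !Dy.
- by move=> f xs ys _ _ Txys; rewrite /theta mix_pow; apply: subR.
Qed.

Lemma Bk_glue c d : Bk c -> Bk d -> abut i c d -> Bk (mix i c d).
Proof.
by move=> [Rc Dc] [Rd Dd] cd; split; [apply: glue_degenerate | apply: degenerate_mix].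
Qed.

(* The Shifting Lemma in [Bk] for the kernels [same_face i (~~ b)] and
   [same_face i b] and the congruence [theta]: its meet condition holds
   because a cube is determined by its two [i]-faces. *)
Lemma theta_shift (b : bool) x y u v : Bk x -> Bk y -> Bk u -> Bk v ->
  same_face i b x u -> same_face i b y v ->
  same_face i (~~ b) x y -> same_face i (~~ b) u v -> theta x u -> theta y v.
Proof.
have diag a a' : Bk a -> Bk a' ->
    same_face i (~~ b) a a' -> same_face i b a a' -> theta a a'.
  move=> Ba _ ab' ab; have [th1 _ _ _] := theta_congruence.
  suff <- : a = a' by apply: th1.
  by case: b ab ab' => ab ab'; apply: same_faces_eq.
move=> Bx By Bu Bv.
exact: (shifting CM (models_pow (S := S) mA) Bk_sub
  (same_face_congruence opsA Bk i (~~ b)) (same_face_congruence opsA Bk i b)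
  theta_congruence diag Bx By Bu Bv).
Qed.

(* [theta] is compatible with composition in direction [i] when the first
   components share their [1]-face: shift [theta] first across the common
   [1]-face ([c], [c'] to [mix i c d], [mix i c' d]), then across the common
   [0]-face ([d], [d'] to [mix i c' d], [mix i c' d']). *)
Lemma theta_glue_step c d c' d' : Bk c -> Bk d -> Bk c' -> Bk d' ->
  abut i c d -> abut i c' d' -> same_face i true c c' ->
  theta c c' -> theta d d' -> theta (mix i c d) (mix i c' d').
Proof.
move=> Bc Bd Bc' Bd' cd cd' cc' Tcc' Tdd'.
have c'd : abut i c' d by move=> h; rewrite -cc' cd.
have dd' : same_face i false d d' by move=> h; rewrite -cd cc' cd'.
have B_cd := Bk_glue Bc Bd cd.
have B_c'd := Bk_glue Bc' Bd c'd.
have B_c'd' := Bk_glue Bc' Bd' cd'.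
have [_ _ th_trans _] := theta_congruence.
apply: (th_trans _ (mix i c' d)) => //.
- by apply: (theta_shift (b := true) Bc B_cd Bc' B_c'd) => // h;
    rewrite !mixE upd_at.
- by apply: (theta_shift (b := false) Bd B_c'd Bd' B_c'd') => // h;
    rewrite !mixE upd_at.
Qed.

(* Pairs of members of [Bk] that abut in direction [i]: a subalgebra of
   [Bk * Bk] on which composition in direction [i] is a homomorphism. *)
Definition Yk (w : cube S A * cube S A) := [/\ Bk w.1, Bk w.2 & abut i w.1 w.2].

Lemma Yk_sub : subuniverse (prod_ops powA powA) Yk.
Proof.
move=> f ws Yws; split; try by apply: Bk_sub => j; case: (Yws j).
move=> h; rewrite /= !powE; congr (opsA f _).
by apply: functional_extensionality => j; case: (Yws j).
Qed.

Lemma theta_refl (b : bool) a a' :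
  theta a a' -> theta (refl_cube i b a) (refl_cube i b a').
Proof. by rewrite /theta -refl_mix //; apply: (tolerance_refl tolR). Qed.

(* [theta] is compatible with composition in direction [i]: by the Shifting
   Lemma in the algebra of pairs [Yk], the hypothesis of [theta_glue_step]
   about the [1]-faces can be removed, using the square
       (c0', c0') --(theta, theta)-- (c1', c1')
           |                              |
       (c0, d0)   --(theta, theta)--  (c1, d1)
   whose vertical sides share their first [1]-faces ([c' := refl_i^1 c]). *)
Lemma theta_glue c0 d0 c1 d1 : Yk (c0, d0) -> Yk (c1, d1) ->
  theta c0 c1 -> theta d0 d1 -> theta (mix i c0 d0) (mix i c1 d1).
Proof.
move=> Y0 Y1 T0 T1.
have fstB w : Yk w -> Bk w.1 by case.
have sndB w : Yk w -> Bk w.2 by case.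
have mixB w : Yk w -> Bk (mix i w.1 w.2) by case=> *; apply: Bk_glue.
pose opsY := prod_ops powA powA.
have mix_hom f (ws : 'I_(ar f) -> cube S A * cube S A) :
    mix i (opsY f ws).1 (opsY f ws).2 = powA (fun j => mix i (ws j).1 (ws j).2).
  by rewrite mix_pow.
have cal := rel_congruence_pull (oW := opsY) (phi := fst)
              (same_face_congruence opsA Bk i true) fstB (fun _ _ => erefl).
have cbe := rel_congruence_and
  (rel_congruence_pull (oW := opsY) (phi := fst) theta_congruence fstB
     (fun _ _ => erefl))
  (rel_congruence_pull (oW := opsY) (phi := snd) theta_congruence sndB
     (fun _ _ => erefl)).
have cga := rel_congruence_pull (oW := opsY) theta_congruence mixB mix_hom.
have meet w w' : Yk w -> Yk w' -> same_face i true w.1 w'.1 ->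
    theta w.1 w'.1 /\ theta w.2 w'.2 -> theta (mix i w.1 w.2) (mix i w'.1 w'.2).
  by case: w w' => c d [c' d'] [? ? ?] [? ? ?] /= ? [? ?]; apply: theta_glue_step.
have Y_refl c : Bk c -> Yk (refl_cube i true c, refl_cube i true c).
  move=> [Rc Dc]; have Bc' : Bk (refl_cube i true c).
    by split; [apply: (tolerance_refl tolR) | apply: degenerate_refl].
  by split=> // h; rewrite !reflE !upd_upd.
have [B0 _ _] := Y0; have [B1 _ _] := Y1.
have upper_face c h : refl_cube i true c (upd h i true) = c (upd h i true).
  by rewrite reflE upd_upd.
apply: (shifting CM (models_prod (models_pow (S := S) mA) (models_pow (S := S) mA))
          Yk_sub cal cbe cga meet (Y_refl _ B0) Y0 (Y_refl _ B1) Y1) => //=.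
- by split; apply: theta_refl.
- by rewrite !mix_id; apply: theta_refl.
Qed.

(* Write [c = mix k c_0 c_1] and [d = mix k d_0 d_1] with [k]-degenerate
   [c_b], [d_b]; then [mix i c d = mix k (mix i c_0 d_0) (mix i c_1 d_1)], and
   its membership in [R] is exactly an instance of [theta_glue]. *)
Lemma gluing_transfer : gluing_closed i R.
Proof.
move=> c d Rc Rd cd.
have Bk_refl e b : R e -> Bk (refl_cube k b e).
  by move=> Re; split; [apply: (tolerance_refl tolR) | apply: refl_degenerate].
have Y b : Yk (refl_cube k b c, refl_cube k b d).
  by split; [apply: Bk_refl | apply: Bk_refl | apply: abut_refl].
have T e : R e -> theta (refl_cube k false e) (refl_cube k true e).
  by rewrite /theta mix_refl.
have := theta_glue (Y false) (Y true) (T c Rc) (T d Rd).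
by rewrite /theta mix_interchange !mix_refl.
Qed.

End GluingTransfer.

(* Proposition 2.9.  Only the transitivity part of the hypothesis on
   [face_k(R)] is needed: directions [i != k] are handled by
   [gluing_transfer], whose degenerate case is supplied by the congruence
   [face_k^0(R)] through [degenerate_gluing]. *)
Theorem proposition2p9
  (F : Type) (ar : F -> nat) (E : term ar -> term ar -> Prop)
  (A : Type) (opsA : ops_on ar A) (n : nat)
  (R : cube 'I_n A -> Prop) :
  CM_variety E -> models E opsA -> 2 <= n ->
  cube_tolerance opsA R ->
  (forall i : 'I_n, cube_congruence opsA (face_set i false R)) ->
  (exists k : 'I_n,
     congruence_of_sub (@pow_ops F ar (minus k) A opsA) (face_set k false R)
                       (face_rel k R)) ->
  cube_congruence opsA R.
Proof.
move=> CM mA _ tolR faces [k [_ _ _ trans_k _]].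
have glue_k : gluing_closed k R by apply/transitive_face_relP.
split=> // i; apply/transitive_face_relP.
have [->|ik] := eqVneq i k; first exact: glue_k.
apply: (gluing_transfer CM mA tolR ik glue_k).
apply: degenerate_gluing; first by move=> c; apply: (tolerance_refl tolR).
exact: (proj2 (faces k) (exist _ i ik)).
Qed.
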